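(* For any integer $n\geq 4$, we have $\chi(\overline{K}(n,2))\leq h_o(\overline{K}(n,2))$, and $\overline{K}(n,2)$ contains a strongly $1$-shallow $K_t$-minor, where $t=n-1=\chi(\overline{K}(n,2))$ when $n$ is even and $t=n=\chi(\overline{K}(n,2))$ when $n$ is odd.
   Context: $\overline{K}(n,k)$ is the complement of the Kneser graph: its vertices are the $k$-element subsets of $[n]=\{1,\dots,n\}$, two distinct ones adjacent iff they intersect. $\chi$ is chromatic number. A $K_t$-minor of a graph $G$ is given by $t$ pairwise vertex-disjoint connected subgraphs (bags), any two joined by an edge of $G$. A star is $K_{1,s}$, $s\ge1$. A $K_t$-minor is strongly $1$-shallow if each bag is a single vertex or a star, and every two bags are joined by an edge each of whose endpoints is either the unique vertex of a single-vertex bag or a leaf of a star bag. Signed graphs: $(G,\sigma)$ with $\sigma:E(G)\to\{+,-\}$; switching at $x$ flips signs of edges at $x$. $(H,\pi)$ is a minor of $(G,\sigma)$ if for some $\tau$ switching equivalent to $\sigma$ there are disjoint subgraphs $B_x$ ($x\in V(H)$) whose $\tau$-positive edges span each $B_x$ connectedly, and for each edge $xy$ of $H$ an edge $uv$ with $u\in B_x,v\in B_y$ and $\tau(uv)=\pi(xy)$. $h_o(G)$ is the largest $t$ such that $(K_t,-)$ (all edges negative) is a minor of $(G,-)$. *)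

From mathcomp Require Import all_boot.
Set Implicit Arguments. Unset Strict Implicit. Unset Printing Implicit Defensive.

Definition kset (n k : nat) := {A : {set 'I_n} | #|A| == k}.

Definition kneserC_rel (n k : nat) : rel (kset n k) :=
  fun A B => (A != B) && (val A :&: val B != set0).

Definition colorable (T : finType) (e : rel T) (k : nat) : Prop :=
  exists f : T -> 'I_k, forall x y, e x y -> f x != f y.

Definition is_chromatic_number (T : finType) (e : rel T) (k : nat) : Prop :=
  colorable e k /\ forall j, colorable e j -> k <= j.

(* ---- Signed graphs: signature sigma (true = positive, false = negative) ---- *)
(* switching at the vertex set X flips the sign of each edge with exactly one end in X;
   any signature switching equivalent to sigma is of the form (switch X sigma). *)
Definition switch (T : finType) (X : {set T}) (sigma : T -> T -> bool) : T -> T -> bool :=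
  fun u v => sigma u v (+) ((u \in X) (+) (v \in X)).

Definition all_negative (T : Type) : T -> T -> bool := fun _ _ => false.

Definition pos_connected (T : finType) (e : rel T) (tau : T -> T -> bool) (B : {set T}) :=
  (B != set0) /\
  forall x y, x \in B -> y \in B ->
    connect [rel u v | [&& u \in B, v \in B, e u v & tau u v]] x y.

Definition neg_clique_minor (T : finType) (e : rel T) (sigma : T -> T -> bool) (t : nat) : Prop :=
  exists (X : {set T}) (B : 'I_t -> {set T}),
    let tau := switch X sigma in
    [/\ forall i j, i != j -> [disjoint B i & B j],
        forall i, pos_connected e tau (B i) &
        forall i j, i != j ->
          exists u v, [/\ u \in B i, v \in B j, e u v & tau u v = false]].

Definition is_odd_hadwiger (T : finType) (e : rel T) (h : nat) : Prop :=
  neg_clique_minor e (@all_negative T) h /\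
  forall t, neg_clique_minor e (@all_negative T) t -> t <= h.

(* Bag i has centre c i and leaf set L i.  If L i is empty the bag is the single
   vertex c i; otherwise it is the star K_{1,|L i|} with centre c i and leaves L i. *)
Definition bag_vertices (T : finType) (c : T) (L : {set T}) : {set T} := c |: L.
Definition attach (T : finType) (c : T) (L : {set T}) : {set T} :=
  if L == set0 then [set c] else L.

Definition strongly_1_shallow_clique_minor (T : finType) (e : rel T) (t : nat) : Prop :=
  exists (c : 'I_t -> T) (L : 'I_t -> {set T}),
  [/\ forall i, c i \notin L i,
      forall i l, l \in L i -> e (c i) l,
      forall i j, i != j -> [disjoint bag_vertices (c i) (L i) & bag_vertices (c j) (L j)] &
      forall i j, i != j ->
        exists u v, [/\ u \in attach (c i) (L i), v \in attach (c j) (L j) & e u v]].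

From mathcomp Require Import all_boot zify.
From Stdlib Require Import ClassicalDescription.
Set Implicit Arguments. Unset Strict Implicit. Unset Printing Implicit Defensive.

(* A colour class of the complement of K(n,2) is a family of pairwise disjoint
   pairs, so it has at most n/2 members and chi >= C(n,2) / floor(n/2), which is
   n for odd n and n - 1 for even n.  Conversely, for odd m, giving a pair
   {x, y} with x, y < m the colour x + y mod m, and the pair {x, m} the colour
   2x mod m, properly colours the complement of K(m+1,2), hence also that of
   K(m,2), with m colours.
   For n >= 4 the pairs {0, i}, 0 < i < n, form a clique, and the star centred
   at {1, 2} whose leaves are the other pairs meeting {1, 2} and avoiding 0
   reaches each of them: a strongly 1-shallow K_n-minor.  Switching at the
   centres of the star bags makes every edge inside a bag positive and leaves
   every edge between attachment vertices negative, so a strongly 1-shallow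
   K_t-minor of G is a (K_t, -)-minor of (G, -). *)

Section StarBags.
Variables (T : finType) (e : rel T) (t : nat).
Hypothesis e_sym : symmetric e.
Variables (c : 'I_t -> T) (L : 'I_t -> {set T}).
Hypothesis c_notin_L : forall i, c i \notin L i.
Hypothesis centre_adj : forall i l, l \in L i -> e (c i) l.
Hypothesis bags_disjoint : forall i j, i != j ->
  [disjoint bag_vertices (c i) (L i) & bag_vertices (c j) (L j)].
Hypothesis attach_adj : forall i j, i != j ->
  exists u v, [/\ u \in attach (c i) (L i), v \in attach (c j) (L j) & e u v].

Let bag i := bag_vertices (c i) (L i).
Let centres := [set c i | i : 'I_t & L i != set0].

Lemma centre_in_bag i : c i \in bag i.
Proof. exact: setU11. Qed.

Lemma leaf_in_bag i l : l \in L i -> l \in bag i.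
Proof. by move=> lL; rewrite /bag /bag_vertices inE lL orbT. Qed.

Lemma centre_notin_other_bag i j : i != j -> c i \notin bag j.
Proof. by move=> ij; rewrite (disjointFr (bags_disjoint ij)) ?centre_in_bag. Qed.

Lemma leaf_notin_centres j l : l \in L j -> l \notin centres.
Proof.
move=> lL; apply/imsetP=> -[i _ li]; have [ij|ij] := eqVneq i j.
  by move: (c_notin_L i); rewrite -li ij lL.
by move: (centre_notin_other_bag ij); rewrite -li (leaf_in_bag lL).
Qed.

Lemma centre_in_centres j : (c j \in centres) = (L j != set0).
Proof.
apply/imsetP/idP=> [[i]|Lj]; last by exists j; rewrite ?inE.
rewrite inE => Li cji; have [ij|ij] := eqVneq i j; first by rewrite -ij.
by move: (centre_notin_other_bag ij); rewrite -cji centre_in_bag.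
Qed.

Lemma attach_notin_centres j u : u \in attach (c j) (L j) -> u \notin centres.
Proof.
rewrite /attach; case: eqP => [Lj|_]; last exact: leaf_notin_centres.
by rewrite inE => /eqP ->; rewrite centre_in_centres Lj eqxx.
Qed.

Lemma attach_sub_bag j : attach (c j) (L j) \subset bag j.
Proof.
rewrite /attach; case: eqP => _; first by rewrite sub1set centre_in_bag.
by apply/subsetP=> l; apply: leaf_in_bag.
Qed.

Let tau := switch centres (@all_negative T).

Lemma bag_pos_connected i : pos_connected e tau (bag i).
Proof.
split; first by apply/set0Pn; exists (c i); apply: centre_in_bag.
set r := [rel _ _ | _]; have r_sym : connect_sym r.
  apply: sym_connect_sym => u v /=.
  by rewrite andbCA e_sym /tau /switch [(u \in _) (+) _]addbC.
suff from_centre x : x \in bag i -> connect r (c i) x.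
  by move=> x y /from_centre + /from_centre; rewrite r_sym; apply: connect_trans.
rewrite /bag /bag_vertices in_setU1 => /predU1P [-> //|xL].
apply: connect1; rewrite /= centre_in_bag leaf_in_bag // centre_adj //=.
rewrite /tau /switch centre_in_centres (negbTE (leaf_notin_centres xL)) addbF.
by apply/set0Pn; exists x.
Qed.

Lemma neg_clique_minor_of_star_bags : neg_clique_minor e (@all_negative T) t.
Proof.
exists centres, bag; split => [i j /bags_disjoint //|i|i j /attach_adj [u [v [uA vA uv]]]].
  exact: bag_pos_connected.
exists u, v; split; [exact: subsetP (attach_sub_bag i) _ uA|
  exact: subsetP (attach_sub_bag j) _ vA| by []|].
by rewrite /switch /all_negative (negbTE (attach_notin_centres uA))
  (negbTE (attach_notin_centres vA)).
Qed.

End StarBags.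

Lemma neg_clique_minor_of_strongly_1_shallow (T : finType) (e : rel T) t :
  symmetric e -> strongly_1_shallow_clique_minor e t ->
  neg_clique_minor e (@all_negative T) t.
Proof.
by move=> e_sym [c [L [cL eL dis adj]]]; apply: neg_clique_minor_of_star_bags.
Qed.

Lemma strongly_1_shallow_clique_minor_le (T : finType) (e : rel T) s t :
  s <= t -> strongly_1_shallow_clique_minor e t -> strongly_1_shallow_clique_minor e s.
Proof.
move=> st [c [L [cL eL dis adj]]].
exists (c \o widen_ord st), (L \o widen_ord st).
split=> [i|i|i j ij|i j ij]; [exact: cL | exact: eL | apply: dis | apply: adj];
  by rewrite -val_eqE.
Qed.

Lemma neg_clique_minor_le_card (T : finType) (e : rel T) sigma t :
  neg_clique_minor e sigma t -> t <= #|T|.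
Proof.
move=> [X [B [dis conn _]]].
have pickB i : {x | x \in B i}.
  by apply: sigW; case: (conn i) => /set0Pn.
have pick_inj : injective (fun i => sval (pickB i)).
  move=> i j pij; apply/eqP; apply: contraT => ij.
  by move: (disjointFr (dis i j ij) (svalP (pickB i))); rewrite pij (svalP (pickB j)).
by rewrite -[t]card_ord; apply: leq_card pick_inj.
Qed.

Lemma odd_hadwiger_exists (T : finType) (e : rel T) t :
  neg_clique_minor e (@all_negative T) t -> exists h, is_odd_hadwiger e h /\ t <= h.
Proof.
set P := neg_clique_minor e _ => Pt.
pose Pb s := if excluded_middle_informative (P s) then true else false.
have PbP s : reflect (P s) (Pb s).
  by rewrite /Pb; case: excluded_middle_informative => Ps; constructor.
have exP : exists s, Pb s by exists t; apply/PbP.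
have ubP s : Pb s -> s <= #|T| by move/PbP/neg_clique_minor_le_card.
case: (ex_maxnP exP ubP) => h /PbP Ph h_max.
by exists h; split; [split=> // s /PbP /h_max | apply/h_max/PbP].
Qed.

Lemma colorable_card_le (T : finType) (e : rel T) k a :
  (forall S : {set T}, {in S &, forall x y, ~~ e x y} -> #|S| <= a) ->
  colorable e k -> #|T| <= k * a.
Proof.
move=> indep_le [f f_proper].
rewrite -sum1_card (partition_big f xpredT) //=.
apply: (@leq_trans (\sum_(col < k) a)); last by rewrite sum_nat_const card_ord.
apply: leq_sum => col _; rewrite sum1dep_card; apply: indep_le => x y.
by rewrite !inE => /eqP fx /eqP fy; apply/negP => /f_proper; rewrite fx fy eqxx.
Qed.

Definition kneserC2_chi (n : nat) := if odd n then n else n - 1.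

Lemma kneserC_sym n k : symmetric (@kneserC_rel n k).
Proof. by move=> A B; rewrite /kneserC_rel eq_sym setIC. Qed.

Lemma card_kset n k : #|{: kset n k}| = 'C(n, k).
Proof.
rewrite card_sig -[X in 'C(X, _)]card_ord -card_draws.
by apply: eq_card => A; rewrite !inE.
Qed.

Lemma kneserC_indep_card n (S : {set kset n 2}) :
  {in S &, forall A B, ~~ kneserC_rel A B} -> #|S| <= n./2.
Proof.
move=> S_indep; pose P := [set val A | A in S].
have P_triv : trivIset P.
  apply/trivIsetP => _ _ /imsetP [A AS ->] /imsetP [B BS ->] AB.
  rewrite -setI_eq0; apply: contraR (S_indep A B AS BS) => meetAB.
  by rewrite /kneserC_rel meetAB andbT; apply: contraNneq AB => ->.
have sumP : \sum_(U in P) #|U| = #|S|.*2.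
  rewrite (eq_bigr (fun _ => 2)) => [|_ /imsetP [A _ ->]]; last exact/eqP/(valP A).
  by rewrite sum_nat_const card_imset ?muln2 //; apply: val_inj.
rewrite geq_half_double -sumP (eqP P_triv); apply: leq_trans (max_card _) _.
by rewrite card_ord.
Qed.

Lemma kneserC2_colorable_ge n k :
  1 < n -> colorable (@kneserC_rel n 2) k -> kneserC2_chi n <= k.
Proof.
move=> n_gt1 /(colorable_card_le (@kneserC_indep_card n)) pairs_le.
have {pairs_le} : n * (n - 1) <= k * (n - odd n).
  by rewrite -halfK -doubleMr subn1 -[n.-1]bin1 mul_bin_diag mul2n leq_double -card_kset.
rewrite /kneserC2_chi; case: (odd n); rewrite ?subn0 => bound.
  by rewrite -(@leq_pmul2r (n - 1)) ?subn_gt0 // mulnC.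
by rewrite -(@leq_pmul2r n) ?(ltnW n_gt1) // mulnC.
Qed.

Definition pair_weight (m x y : nat) : nat :=
  if (x == m) || (y == m) then 2 * (x + y - m) else x + y.

Lemma pair_weightC m x y : pair_weight m x y = pair_weight m y x.
Proof. by rewrite /pair_weight orbC addnC. Qed.

Lemma double_mod_inj m a b :
  odd m -> a < m -> b < m -> 2 * a = 2 * b %[mod m] -> a = b.
Proof.
wlog ab : a b / a <= b => [wlog_ab m_odd am bm eq_ab|m_odd am bm].
  by case: (leqP a b) => [|/ltnW] le_ab; [|apply/esym]; apply: wlog_ab.
move/eqP; rewrite eq_sym eqn_mod_dvd ?leq_mul2l ?ab ?orbT // -mulnBr.
by rewrite Gauss_dvdr ?coprimen2 // /dvdn modn_small => [/eqP|]; lia.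
Qed.

Lemma pair_weight_neq m x a b : odd m -> x <= m -> a <= m -> b <= m ->
  a != x -> b != x -> a != b -> pair_weight m x a != pair_weight m x b %[mod m].
Proof.
move=> m_odd xm am bm ax bx ab; rewrite /pair_weight.
have [xm'|xm'] := eqVneq x m.
  subst x; rewrite /= !(addnC m) !addnK; apply: contra ab => /eqP.
  by move/double_mod_inj => -> //; lia.
have [am'|am'] := eqVneq a m; have [bm'|bm'] := eqVneq b m => /=.
- by rewrite am' bm' eqxx in ab.
- rewrite am' addnK mul2n -addnn eqn_modDl !modn_small; lia.
- rewrite bm' addnK mul2n -addnn eqn_modDl !modn_small; lia.
- rewrite eqn_modDl !modn_small; lia.
Qed.

Lemma cards2_mem (T : finType) (A : {set T}) x :
  #|A| = 2 -> x \in A -> exists2 a, a != x & A = [set x; a].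
Proof.
move=> A2 xA; have /cards1P [a Ax] : #|A :\ x| == 1.
  by move: A2; rewrite (cardsD1 x) xA add1n => -[->].
exists a; last by rewrite -(setD1K xA) Ax.
by have := set11 a; rewrite -Ax !inE => /andP [].
Qed.

Section KneserColoring.
Variable n : nat.
Hypothesis n_gt1 : 1 < n.

Lemma kneserC2_chi_gt0 : 0 < kneserC2_chi n.
Proof. rewrite /kneserC2_chi; case: ifP; lia. Qed.

(* The pair {x, y} with x < y is recovered from A as (sum - max, max). *)
Definition kneserC2_color (A : kset n 2) : 'I_(kneserC2_chi n) :=
  let top := \max_(i in val A) (i : nat) in
  Ordinal (ltn_pmod (pair_weight (kneserC2_chi n) (\sum_(i in val A) (i : nat) - top) top)
                    kneserC2_chi_gt0).

Lemma kneserC2_color_pair (A : kset n 2) (x a : 'I_n) :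
  a != x -> val A = [set x; a] ->
  val (kneserC2_color A) = pair_weight (kneserC2_chi n) x a %% kneserC2_chi n.
Proof.
move=> ax Axa; rewrite /= Axa !big_setU1 ?inE 1?eq_sym //= !big_set1.
by rewrite -addn_min_max addnK; case: leqP; rewrite // pair_weightC.
Qed.

Lemma kneserC2_color_proper (A B : kset n 2) :
  kneserC_rel A B -> kneserC2_color A != kneserC2_color B.
Proof.
case/andP=> AB /set0Pn [x]; rewrite inE => /andP [xA xB].
have [a ax Axa] := cards2_mem (eqP (valP A)) xA.
have [b bx Bxb] := cards2_mem (eqP (valP B)) xB.
have ab : a != b by apply: contraNneq AB => ab; apply/eqP/val_inj; rewrite Axa Bxb ab.
rewrite -val_eqE (kneserC2_color_pair ax Axa) (kneserC2_color_pair bx Bxb).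
have chi_odd : odd (kneserC2_chi n).
  by rewrite /kneserC2_chi; case: ifP => // n_even; rewrite oddB ?n_even //; lia.
have le_chi (i : 'I_n) : i <= kneserC2_chi n.
  by have := ltn_ord i; rewrite /kneserC2_chi; case: ifP; lia.
exact: pair_weight_neq.
Qed.

Lemma kneserC2_chromatic : is_chromatic_number (@kneserC_rel n 2) (kneserC2_chi n).
Proof.
split; last by move=> k; apply: kneserC2_colorable_ge.
by exists kneserC2_color; apply: kneserC2_color_proper.
Qed.

End KneserColoring.

Lemma kset_neq n k (A B : kset n k) x : x \in val A -> x \notin val B -> A != B.
Proof. by move=> xA; apply: contra => /eqP <-. Qed.

Lemma kneserC_rel_of_mem n k (A B : kset n k) x y :
  x \in val A -> x \in val B -> y \in val A -> y \notin val B -> kneserC_rel A B.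
Proof.
move=> xA xB yA yB; rewrite /kneserC_rel (kset_neq yA yB) /=.
by apply/set0Pn; exists x; rewrite inE xA.
Qed.

Section KneserStarMinor.
Variable m : nat.
Local Notation n := m.+4.

Lemma card_pair12 : #|[set (inord 1 : 'I_n); inord 2]| == 2.
Proof. by rewrite cards2 -val_eqE /= !inordK. Qed.

Definition star_centre : kset n 2 := Sub [set inord 1; inord 2] card_pair12.

Definition kpair (a b : 'I_n) : kset n 2 := insubd star_centre [set a; b].

Lemma mem_kpair (a b x : 'I_n) :
  a != b -> (x \in val (kpair a b)) = (x == a :> nat) || (x == b :> nat).
Proof. by move=> ab; rewrite val_insubd cards2 ab !inE. Qed.

Lemma mem_star_centre (x : 'I_n) :
  (x \in val star_centre) = (x == 1 :> nat) || (x == 2 :> nat).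
Proof. by rewrite !inE -!val_eqE /= !inordK. Qed.

Definition star_leaves : {set kset n 2} := [set A | [&& A != star_centre,
  val A :&: val star_centre != set0 & ord0 \notin val A]].

Lemma kpair_star_leaf (a b : 'I_n) :
  a \in val star_centre -> 2 < b -> kpair a b \in star_leaves.
Proof.
rewrite mem_star_centre => a12 b2; have ab : a != b by rewrite -val_eqE /=; lia.
rewrite inE; apply/and3P; split.
- by apply: (kset_neq (x := b)); rewrite ?mem_kpair ?mem_star_centre ?eqxx ?orbT //; lia.
- by apply/set0Pn; exists a; rewrite in_setI mem_kpair ?mem_star_centre ?eqxx.
- by rewrite mem_kpair //=; lia.
Qed.

Lemma star_leaf_adj j : j != ord0 ->
  exists2 A, A \in star_leaves & kneserC_rel A (kpair ord0 j).
Proof.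
rewrite -val_eqE /= => j0; have j0' : ord0 != j by rewrite -val_eqE /=; lia.
have [j2|j2] := leqP j 2.
  have j3 : j != inord 3 by rewrite -val_eqE /= inordK; lia.
  exists (kpair j (inord 3)); first by rewrite kpair_star_leaf ?mem_star_centre ?inordK //; lia.
  apply: (kneserC_rel_of_mem (x := j) (y := inord 3));
  by rewrite ?mem_kpair ?inordK ?eqxx ?orbT //=; lia.
have j1 : inord 1 != j by rewrite -val_eqE /= inordK; lia.
exists (kpair (inord 1) j); first by rewrite kpair_star_leaf ?mem_star_centre ?inordK.
apply: (kneserC_rel_of_mem (x := j) (y := inord 1));
by rewrite ?mem_kpair ?inordK ?eqxx ?orbT //=; lia.
Qed.

Lemma kpair0_notin_star_bag j : j != ord0 ->
  kpair ord0 j \notin bag_vertices star_centre star_leaves.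
Proof.
rewrite -val_eqE /= => j0; have j0' : ord0 != j by rewrite -val_eqE /=; lia.
have ne : kpair ord0 j != star_centre.
  by apply: (kset_neq (x := ord0)); rewrite ?mem_kpair ?mem_star_centre ?eqxx.
by rewrite !inE (negbTE ne) mem_kpair ?eqxx ?andbF.
Qed.

Lemma kpair0_adj i j : i != j -> i != ord0 -> j != ord0 ->
  kneserC_rel (kpair ord0 i) (kpair ord0 j).
Proof.
rewrite -!val_eqE /= => ij i0 j0.
have i0' : ord0 != i by rewrite -val_eqE /=; lia.
have j0' : ord0 != j by rewrite -val_eqE /=; lia.
by apply: (kneserC_rel_of_mem (x := ord0) (y := i)); rewrite ?mem_kpair ?eqxx ?orbT //=; lia.
Qed.

Definition bag_centre (i : 'I_n) := if i == ord0 then star_centre else kpair ord0 i.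
Definition bag_leaves (i : 'I_n) := if i == ord0 then star_leaves else set0.

Lemma kneserC2_strongly_1_shallow_Kn : strongly_1_shallow_clique_minor (@kneserC_rel n 2) n.
Proof.
have leaves_neq0 : star_leaves != set0.
  have [|A A_leaf _] := @star_leaf_adj (inord 1); first by rewrite -val_eqE /= inordK.
  by apply/set0Pn; exists A.
exists bag_centre, bag_leaves; rewrite /bag_centre /bag_leaves; split.
- by move=> i; case: eqP => _; rewrite inE ?eqxx.
- move=> i l; case: eqP => _; last by rewrite inE.
  by rewrite inE kneserC_sym => /and3P [l_neq l_meet _]; rewrite /kneserC_rel l_neq.
- move=> i j ij; rewrite /bag_vertices.
  have [i0|i0] := eqVneq i ord0; have [j0|j0] := eqVneq j ord0.
  + by rewrite i0 j0 eqxx in ij.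
  + by rewrite setU0 disjoint_sym disjoints1 kpair0_notin_star_bag.
  + by rewrite setU0 disjoints1 kpair0_notin_star_bag.
  + rewrite !setU0 disjoints1 inE.
    by case/andP: (kpair0_adj ij i0 j0).
- move=> i j ij; rewrite /attach.
  have [i0|i0] := eqVneq i ord0; have [j0|j0] := eqVneq j ord0;
    rewrite ?eqxx ?(negbTE leaves_neq0).
  + by rewrite i0 j0 eqxx in ij.
  + by have [u u_leaf uj] := star_leaf_adj j0; exists u, (kpair ord0 j); rewrite set11.
  + have [u u_leaf ui] := star_leaf_adj i0; exists (kpair ord0 i), u.
    by rewrite set11 kneserC_sym.
  + by exists (kpair ord0 i), (kpair ord0 j); rewrite !set11 kpair0_adj.
Qed.

End KneserStarMinor.

Theorem lemma2p3 (n : nat) : 4 <= n ->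
  let t := if odd n then n else n - 1 in
  [/\ is_chromatic_number (@kneserC_rel n 2) t,
      (exists h, is_odd_hadwiger (@kneserC_rel n 2) h /\ t <= h) &
      strongly_1_shallow_clique_minor (@kneserC_rel n 2) t].
Proof.
move=> n_ge4 t.
have Kt_minor : strongly_1_shallow_clique_minor (@kneserC_rel n 2) t.
  case: n n_ge4 @t => [|[|[|[|m]]]] // _ t.
  apply: strongly_1_shallow_clique_minor_le (kneserC2_strongly_1_shallow_Kn m).
  by rewrite /t; case: odd; rewrite ?leq_subr.
split=> //; first by apply: kneserC2_chromatic; lia.
apply: odd_hadwiger_exists.
exact: neg_clique_minor_of_strongly_1_shallow (@kneserC_sym n 2) Kt_minor.
Qed.
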